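(* Let $G$ be a $\Delta$-regular graph on $n$ vertices in which every two adjacent vertices have at least $\lambda$ common neighbors. (i) If $\Delta-\lambda\equiv0\pmod 2$, then $\alpha_{\mathrm{od}}(G)\le\frac{\Delta-\lambda-1}{2\Delta-\lambda-1}n$. (ii) If $\Delta-\lambda\equiv1\pmod2$, then $\alpha_{\mathrm{od}}(G)\le\frac{\Delta-\lambda}{2\Delta-\lambda}n$.
   Context: An odd independent set in $G=(V,E)$ is an independent set $S$ such that every $v\in V\setminus S$ has either no neighbor or an odd number of neighbors in $S$; $\alpha_{\mathrm{od}}(G)$ is its maximum size. *)

From mathcomp Require Import all_boot all_order all_algebra.
Set Implicit Arguments. Unset Strict Implicit. Unset Printing Implicit Defensive.

Definition simple_graph (T : finType) (e : rel T) : Prop :=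
  symmetric e /\ irreflexive e.

Definition neighbors (T : finType) (e : rel T) (v : T) : {set T} :=
  [set u | e v u].

Definition regular (T : finType) (e : rel T) (D : nat) : Prop :=
  forall v : T, #|neighbors e v| = D.

Definition adj_common_ge (T : finType) (e : rel T) (l : nat) : Prop :=
  forall u v : T, e u v -> l <= #|neighbors e u :&: neighbors e v|.

Definition independent (T : finType) (e : rel T) (S : {set T}) : bool :=
  [forall x in S, forall y in S, ~~ e x y].

Definition odd_independent (T : finType) (e : rel T) (S : {set T}) : bool :=
  independent e S &&
  [forall v in ~: S, (#|neighbors e v :&: S| == 0) || odd #|neighbors e v :&: S|].

Definition alpha_od (T : finType) (e : rel T) : nat :=
  \max_(S : {set T} | odd_independent e S) #|S|.

(* Double count the edges between an odd independent set S and its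
   complement: every u in S has D neighbours, all outside S.  If v is outside
   S and adjacent to some u in S, then the at least l common neighbours of u
   and v lie outside S, so v has at most D - l neighbours in S; that number
   is odd, hence at most k, the largest odd number not exceeding D - l.  Thus
   |S| D <= k (n - |S|), i.e. |S| <= k n / (D + k), and k = D - l - 1 or
   k = D - l according to the parity of D - l. *)

From mathcomp Require Import all_boot all_order all_algebra.
From mathcomp Require Import zify.

Set Implicit Arguments.
Unset Strict Implicit.
Unset Printing Implicit Defensive.
Import Order.TTheory GRing.Theory Num.Theory.

Section IndependentSets.
Variables (T : finType) (e : rel T).

Lemma independentP (S : {set T}) :
  reflect {in S &, forall x y, ~~ e x y} (independent e S).
Proof.
apply: (iffP forall_inP) => [indS x y xS yS | indS x xS].
  by move: (indS x xS) => /forall_inP; apply.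
by apply/forall_inP => y; apply: indS.
Qed.

Lemma neighborsI_independent (S : {set T}) u :
  independent e S -> u \in S -> neighbors e u :&: S = set0.
Proof.
move=> /independentP indS uS; apply/setP => x; rewrite !inE.
by apply/andP => -[eux xS]; move: (indS u x uS xS); rewrite eux.
Qed.

Lemma card_neighbors u : #|neighbors e u| = \sum_v e u v.
Proof.
by rewrite -sum1_card big_mkcond; apply: eq_bigr => v _; rewrite inE; case: e.
Qed.

Lemma card_neighborsI (S : {set T}) v :
  #|neighbors e v :&: S| = \sum_(u in S) e v u.
Proof.
rewrite -sum1_card big_mkcond [RHS]big_mkcond; apply: eq_bigr => u _.
by rewrite !inE andbC; case: (u \in S); case: e.
Qed.

Lemma card_neighborsI_independent (S : {set T}) u v :
  independent e S -> u \in S -> e v u ->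
  #|neighbors e v :&: S| + #|neighbors e u :&: neighbors e v|
    <= #|neighbors e v|.
Proof.
move=> indS uS evu.
have disj : (neighbors e v :&: S) :&: (neighbors e u :&: neighbors e v) = set0.
  rewrite [_ :&: S]setIC setIACA [S :&: _]setIC.
  by rewrite neighborsI_independent ?set0I.
rewrite -cardsUI disj cards0 addn0; apply: subset_leq_card.
by rewrite subUset subsetIl subsetIr.
Qed.

Hypothesis e_sym : symmetric e.

Lemma sum_card_neighbors (S : {set T}) :
  \sum_(u in S) #|neighbors e u| = \sum_v #|neighbors e v :&: S|.
Proof.
under eq_bigr do rewrite card_neighbors.
rewrite exchange_big; apply: eq_bigr => v _.
by rewrite card_neighborsI; apply: eq_bigr => u _; rewrite e_sym.
Qed.

Lemma sum_card_neighbors_independent (S : {set T}) : independent e S ->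
  \sum_(u in S) #|neighbors e u| = \sum_(v in ~: S) #|neighbors e v :&: S|.
Proof.
move=> indS; rewrite sum_card_neighbors (bigID (mem S)) /= big1 ?add0n.
  by apply: eq_bigl => v; rewrite inE.
by move=> v vS; rewrite neighborsI_independent ?cards0.
Qed.

Lemma card_common_neighbors_lt u v : irreflexive e -> e u v ->
  #|neighbors e u :&: neighbors e v| < #|neighbors e u|.
Proof.
move=> e_irr euv; apply/proper_card/properP; split; first exact: subsetIl.
by exists v; rewrite !inE ?euv ?e_irr.
Qed.

End IndependentSets.

Lemma odd_independent0 (T : finType) (e : rel T) : odd_independent e set0.
Proof.
apply/andP; split; first by apply/independentP => x; rewrite inE.
by apply/forall_inP => v _; rewrite setI0 cards0.
Qed.

Lemma alpha_od_le_card (T : finType) (e : rel T) : alpha_od e <= #|T|.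
Proof. by apply/bigmax_leqP => S _; apply: max_card. Qed.

Lemma alpha_odE (T : finType) (e : rel T) :
  exists2 S, odd_independent e S & alpha_od e = #|S|.
Proof.
have [|S] := @eq_bigmax_cond _ (odd_independent e) (fun S => #|S|).
  by apply/card_gt0P; exists set0; apply: odd_independent0.
by exists S.
Qed.

Section RegularGraphs.
Variables (T : finType) (e : rel T) (D l : nat).
Hypotheses (e_sym : symmetric e) (e_reg : regular e D).
Hypothesis e_common : adj_common_ge e l.

Lemma card_neighborsI_independent_le (S : {set T}) v : independent e S ->
  0 < #|neighbors e v :&: S| -> #|neighbors e v :&: S| + l <= D.
Proof.
move=> indS /card_gt0P [u]; rewrite !inE => /andP [evu uS].
rewrite -(e_reg v).
apply: leq_trans (card_neighborsI_independent indS uS evu).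
by rewrite leq_add2l e_common // e_sym.
Qed.

Lemma card_odd_independent_le (S : {set T}) k :
  (forall c, 0 < c -> odd c -> c + l <= D -> c <= k) ->
  odd_independent e S -> #|S| * (D + k) <= k * #|T|.
Proof.
move=> le_k /andP [indS /forall_inP oddS].
have edges_le : #|S| * D <= #|~: S| * k.
  have -> : #|S| * D = \sum_(u in S) #|neighbors e u|.
    by rewrite -sum_nat_const; apply: eq_bigr => u _; rewrite e_reg.
  rewrite sum_card_neighbors_independent // -sum_nat_const.
  apply: leq_sum => v vS; have /orP [/eqP -> // | odd_c] := oddS v vS.
  have c_gt0 : 0 < #|neighbors e v :&: S| by case: #|_| odd_c.
  exact: le_k c_gt0 odd_c (card_neighborsI_independent_le indS c_gt0).
by rewrite -(cardsC S) !mulnDr; nia.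
Qed.

Lemma alpha_od_le k :
  (forall c, 0 < c -> odd c -> c + l <= D -> c <= k) ->
  alpha_od e * (D + k) <= k * #|T|.
Proof.
move=> le_k; have [S oddS ->] := @alpha_odE _ e.
exact: card_odd_independent_le.
Qed.

Lemma common_lt_degree : irreflexive e -> 0 < D -> 0 < #|T| -> l < D.
Proof.
move=> e_irr D_gt0 /card_gt0P [t _].
have /card_gt0P [u] : 0 < #|neighbors e t| by rewrite e_reg.
rewrite inE => etu; rewrite -(e_reg t).
exact: leq_ltn_trans (e_common etu) (card_common_neighbors_lt e_irr etu).
Qed.

End RegularGraphs.

Lemma ler_nat_mul_div (R : numFieldType) (a k m n : nat) :
  0 < m -> a * m <= k * n -> ((a%:R : R) <= k%:R / m%:R * n%:R)%R.
Proof.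
by move=> m_gt0 le_am; rewrite mulrAC ler_pdivlMr ?ltr0n // -!natrM ler_nat.
Qed.

Theorem proposition5 (T : finType) (e : rel T) (D l : nat) :
  simple_graph e -> regular e D -> adj_common_ge e l ->
  (((D%:Z - l%:Z) %% 2)%Z = 0%:Z ->
     ((alpha_od e)%:R : rat) <=
       ((D%:Z - l%:Z - 1)%:~R / (2 * D%:Z - l%:Z - 1)%:~R) * (#|T|)%:R)%R /\
  (((D%:Z - l%:Z) %% 2)%Z = 1%:Z ->
     ((alpha_od e)%:R : rat) <=
       ((D%:Z - l%:Z)%:~R / (2 * D%:Z - l%:Z)%:~R) * (#|T|)%:R)%R.
Proof.
move=> [e_sym e_irr] e_reg e_common.
have [n0 | n_gt0] := posnP #|T|.
  by have := alpha_od_le_card e; rewrite n0 leqn0 => /eqP ->; rewrite !mulr0.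
have [D0 | D_gt0] := posnP D.
  have alpha_le_n : ((alpha_od e)%:R <= #|T|%:R :> rat)%R.
    by rewrite ler_nat alpha_od_le_card.
  by subst D; split=> parity; rewrite mulr0 divff ?mul1r // intr_eq0; lia.
have l_lt_D := common_lt_degree e_reg e_common e_irr D_gt0 n_gt0.
split=> parity.
- have := alpha_od_le e_sym e_reg e_common (k := D - l - 1).
  rewrite (_ : D%:Z - l%:Z - 1 = (D - l - 1)%N)%R; last by lia.
  rewrite (_ : 2 * D%:Z - l%:Z - 1 = (D + (D - l - 1))%N)%R; last by lia.
  by move=> alpha_le; apply: ler_nat_mul_div; [lia | apply: alpha_le => c; lia].
- have := alpha_od_le e_sym e_reg e_common (k := D - l).
  rewrite (_ : 2 * D%:Z - l%:Z = (D + (D - l))%N)%R; last by lia.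
  rewrite (_ : D%:Z - l%:Z = (D - l)%N)%R; last by lia.
  by move=> alpha_le; apply: ler_nat_mul_div; [lia | apply: alpha_le => c; lia].
Qed.
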